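(* Let $\Gamma$ be a simple graph on $m$ vertices labeled $1,\dots,m$ and with $n$ edges, and give the edges the NBC labeling. Then every increasing $\Gamma$-forest contains no broken cycle (i.e. is an NBC forest).
   Context: NBC labeling: write each edge as $(i,j)$ with $i<j$; the edges are labeled $1,\dots,n$ so that edges with smaller vertex sum $i+j$ receive larger labels (the edge of smallest sum gets label $n$), and if two edges $(i_1,j_1),(i_2,j_2)$ have the same sum, the one with larger second vertex ($j_1>j_2$) receives the smaller label. A broken cycle is the edge set of a cycle of $\Gamma$ minus its edge of largest label. A tree in $\Gamma$ is increasing if it is rooted at its smallest-labeled vertex and every path from the root to a leaf passes through vertices with increasing labels; a $\Gamma$-forest (a forest subgraph of $\Gamma$) is increasing if each of its trees is increasing. *)

From mathcomp Require Import all_boot.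
Set Implicit Arguments. Unset Strict Implicit. Unset Printing Implicit Defensive.

(* Vertices 1..m are represented by 'I_m (vertex k+1 <-> ordinal k).
   An edge (i,j) with i<j is the pair (i,j) : 'I_m * 'I_m. *)
Section NBC.
Variable m : nat.
Notation V := 'I_m.
Notation edge := (V * V)%type.

Definition simple_edges (E : {set edge}) : Prop :=
  forall e, e \in E -> (e.1 < e.2)%N.

Definition esum (e : edge) : nat := (e.1 + e.2)%N.

Definition smaller_label (f e : edge) : bool :=
  (esum e < esum f)%N || ((esum f == esum e) && (e.2 < f.2)%N).

Definition nbc_label (E : {set edge}) (e : edge) : nat :=
  #|[set f in E | smaller_label f e]|.+1.

Definition adj (S : {set edge}) : rel V :=
  fun u v => ((u, v) \in S) || ((v, u) \in S).

Definition norm_edge (u v : V) : edge := if (u < v)%N then (u, v) else (v, u).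

Definition is_cycle (S : {set edge}) (c : seq V) : Prop :=
  (3 <= size c)%N /\ uniq c /\ cycle (adj S) c.

Definition cycle_edges (c : seq V) : {set edge} :=
  [set e | e \in [seq norm_edge p.1 p.2 | p <- zip c (rot 1 c)]].

Definition broken_cycle (E : {set edge}) (B : {set edge}) : Prop :=
  exists c, is_cycle E c /\
    exists2 e, e \in cycle_edges c &
      (forall f, f \in cycle_edges c -> (nbc_label E f <= nbc_label E e)%N) /\
      B = cycle_edges c :\ e.

Definition acyclic (F : {set edge}) : Prop := forall c, ~ is_cycle F c.

(* r is the root of its tree: the smallest vertex of its component *)
Definition is_root (F : {set edge}) (r : V) : Prop :=
  forall u, connect (adj F) r u -> (r <= u)%N.

(* a leaf of the rooted tree (non-root vertex without children, i.e. of degree 1) *)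
Definition is_leaf (F : {set edge}) (v : V) : Prop :=
  #|[set w | adj F v w]| = 1%N.

Definition increasing_forest (E F : {set edge}) : Prop :=
  [/\ F \subset E, acyclic F &
      forall (r : V) (p : seq V), is_root F r ->
        uniq (r :: p) -> path (adj F) r p -> p <> [::] -> is_leaf F (last r p) ->
        sorted (fun u v : V => (u < v)%N) (r :: p)].

End NBC.

(* Suppose a broken cycle of a cycle c lies in the increasing forest F, and let
   M be the largest vertex of c.  The edge of c with the largest label cannot
   contain M: if it were {z, M}, the other edge {z, y} of c at z would have the
   smaller vertex sum z + y < z + M, hence a larger label.  So both edges of c
   at M lie in F, and M has two distinct smaller neighbours in F.  This is
   impossible in an increasing tree, where every neighbour z of v other than
   its parent is larger than v: z is off the root path to v, and extending
   root - ... - v - z to a leaf gives a root-to-leaf path on which v < z. *)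

From mathcomp Require Import all_boot zify.
Set Implicit Arguments. Unset Strict Implicit. Unset Printing Implicit Defensive.

Lemma prev_neq_next (T : eqType) (c : seq T) x :
  uniq c -> 2 < size c -> x \in c -> prev c x != next c x.
Proof.
move=> uc sc /rot_to[i s def_c].
have /andP[xs us] : uniq (x :: s) by rewrite -def_c rot_uniq.
have : 2 < size (x :: s) by rewrite -def_c size_rot.
rewrite -(prev_rot i uc) -(next_rot i uc) def_c prev_nth next_nth mem_head /=.
rewrite eqxx (memNindex xs); case: s {def_c} xs us => [|y s] // _ us s_gt1.
rewrite -[y]/(nth x (y :: s) 0) [nth _ (x :: _) _]/= (nth_uniq x) //.
by case: s {us} s_gt1.
Qed.

Lemma cycle_zip_rot1 (T : Type) (e : rel T) (c : seq T) :
  cycle e c = all [pred p | e p.1 p.2] (zip c (rot 1 c)).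
Proof.
case: c => [|x s] //=; rewrite rot1_cons.
by elim: s {1 3}x => [|y s IHs] z //=; rewrite IHs.
Qed.

Lemma mem_zip_rot1_next (T : eqType) (c : seq T) x :
  x \in c -> (x, next c x) \in zip c (rot 1 c).
Proof.
apply: (next_cycle (e := fun u v => (u, v) \in zip c (rot 1 c))).
by rewrite cycle_zip_rot1; apply/allP => -[].
Qed.

Lemma card_neq1_other (T : finType) (A : {set T}) x :
  x \in A -> #|A| != 1 -> exists2 y, y \in A & y != x.
Proof.
move=> xA A_neq1; apply/exists_inP; apply: contraNT A_neq1 => /exists_inPn A_x.
apply/cards1P; exists x; apply/eqP; rewrite eqEsubset sub1set xA andbT.
by apply/subsetP => y /A_x; rewrite negbK inE.
Qed.

Section EdgeSets.
Variable m : nat.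
Implicit Types (S E : {set 'I_m * 'I_m}) (c : seq 'I_m) (u v x y z M : 'I_m).

Lemma adj_sym S : symmetric (adj S).
Proof. by move=> u v; rewrite /adj orbC. Qed.

Lemma simple_adj_irrefl S u : simple_edges S -> ~~ adj S u u.
Proof. by move=> simS; rewrite /adj orbb; apply/negP => /simS; rewrite ltnn. Qed.

Lemma norm_edgeC u v : norm_edge u v = norm_edge v u.
Proof. by rewrite /norm_edge; case: ltngtP => // /val_inj->. Qed.

Lemma esum_norm_edge u v : esum (norm_edge u v) = u + v.
Proof. by rewrite /norm_edge /esum; case: ifP => //= _; rewrite addnC. Qed.

Lemma adjE S u v : simple_edges S -> adj S u v = (norm_edge u v \in S).
Proof.
move=> simS; rewrite /adj /norm_edge.
have notS (a b : 'I_m) : a < b -> (b, a) \in S = false.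
  by move=> ab; apply/negP => /simS /=; rewrite ltnNge ltnW.
by case: ltngtP => [/notS-> | /notS-> | /val_inj->]; rewrite ?orbF ?orbb.
Qed.

Lemma closed_path_is_cycle S y q v :
  uniq (y :: rcons q v) -> path (adj S) y (rcons q v) -> adj S v y -> q != [::] ->
  is_cycle S (y :: rcons q v).
Proof.
move=> u p vy q0; split; last by rewrite /= rcons_path p last_rcons vy.
by rewrite /= size_rcons; case: q q0 {u p}.
Qed.

Lemma cycle_edges_next c x : x \in c -> norm_edge x (next c x) \in cycle_edges c.
Proof. by move=> xc; rewrite inE (map_f _ (mem_zip_rot1_next xc)). Qed.

Lemma cycle_edges_prev c x : uniq c -> x \in c -> norm_edge x (prev c x) \in cycle_edges c.
Proof.
move=> uc xc; rewrite norm_edgeC -{2}(next_prev uc x).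
by apply: cycle_edges_next; rewrite mem_prev.
Qed.

Lemma cycle_edges_sub S c : simple_edges S -> is_cycle S c -> cycle_edges c \subset S.
Proof.
move=> simS [_ [_]]; rewrite cycle_zip_rot1 => /allP cycS.
by apply/subsetP => e; rewrite inE => /mapP[p /cycS /=]; rewrite adjE // => Sp ->.
Qed.

Lemma smaller_label_trans : transitive (@smaller_label m).
Proof.
move=> e g f; rewrite /smaller_label /esum.
by move=> /orP[?|/andP[/eqP ? ?]] /orP[?|/andP[/eqP ? ?]]; lia.
Qed.

Lemma nbc_label_lt E e f :
  e \in E -> smaller_label e f -> nbc_label E e < nbc_label E f.
Proof.
move=> eE ef; rewrite ltnS; apply/proper_card/properP; split.
  by apply/subsetP => g; rewrite !inE => /andP[-> /smaller_label_trans->].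
by exists e; rewrite !inE eE ?ef // /smaller_label ltnn eqxx ltnn.
Qed.

Lemma max_label_edge_avoids_max_vertex E c e M z :
  simple_edges E -> is_cycle E c -> e \in cycle_edges c ->
  (forall f, f \in cycle_edges c -> nbc_label E f <= nbc_label E e) ->
  (forall y, y \in c -> y <= M) -> z \in c -> e != norm_edge z M.
Proof.
move=> simE cycE ec emax c_le_M zc; have [c_gt2 [uc _]] := cycE.
have [y [yc yM zyc]] : exists y, [/\ y \in c, y != M & norm_edge z y \in cycle_edges c].
  case: (eqVneq (prev c z) M) => [zM | zM].
    by exists (next c z); rewrite mem_next cycle_edges_next // -zM eq_sym prev_neq_next.
  by exists (prev c z); rewrite mem_prev cycle_edges_prev.
apply: contraTneq (emax _ zyc) => def_e; rewrite -ltnNge nbc_label_lt //.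
  by apply: (subsetP (cycle_edges_sub simE cycE)).
by rewrite /smaller_label def_e !esum_norm_edge ltn_add2l ltn_neqAle yM c_le_M.
Qed.

End EdgeSets.

Section Forest.
Variables (m : nat) (F : {set 'I_m * 'I_m}).
Hypotheses (simF : simple_edges F) (acF : acyclic F).
Implicit Types (r u v w y z : 'I_m) (q s t : seq 'I_m).

Lemma exists_root_path v :
  exists r q, [/\ is_root F r, uniq (r :: q), path (adj F) r q & last r q = v].
Proof.
have [r vr r_min] := arg_minnP val (connect0 (adj F) v).
have csym := sym_connect_sym (adj_sym F).
have /connectP[p pp def_v] : connect (adj F) r v by rewrite csym.
move: def_v; case: (shortenP pp) => q pq uq _ def_v.
exists r, q; split=> // u ru; apply: r_min; exact: connect_trans vr ru.
Qed.

Lemma acyclic_path_nbr r q v y :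
  uniq (r :: rcons q v) -> path (adj F) r (rcons q v) -> y \in r :: q -> adj F v y ->
  y = last r q.
Proof.
move=> + + yq vy; case/splitPl: yq => q1 q2 def_y.
rewrite rcons_cat -cat_cons cat_uniq cat_path last_cat def_y.
move=> /and3P[_ y_notin u2] /andP[_ p2]; case: q2 => [|z q2] // in u2 p2 y_notin *.
have uy : uniq (y :: rcons (z :: q2) v).
  rewrite cons_uniq u2 andbT; apply: contra y_notin => yq.
  by apply/hasP; exists y; rewrite // -def_y mem_last.
by case: (acF (closed_path_is_cycle uy p2 vy _)).
Qed.

Lemma path_extend r q v z :
  uniq (r :: rcons q v) -> path (adj F) r (rcons q v) -> adj F v z -> z != last r q ->
  uniq (r :: rcons (rcons q v) z) /\ path (adj F) r (rcons (rcons q v) z).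
Proof.
move=> u p vz zx; rewrite -rcons_cons rcons_uniq u rcons_path p last_rcons vz andbT.
split=> //; rewrite -rcons_cons mem_rcons inE negb_or; apply/andP; split.
  by apply: contraTneq vz => ->; exact: simple_adj_irrefl.
by apply: contra zx => zq; rewrite (acyclic_path_nbr u p zq vz).
Qed.

Lemma extend_to_leaf r s :
  uniq (r :: s) -> path (adj F) r s -> s != [::] ->
  exists t, [/\ uniq (r :: s ++ t), path (adj F) r (s ++ t) & is_leaf F (last r (s ++ t))].
Proof.
have [k] := ubnP (m - size s); elim: k s => // k IHk s bound us ps s0.
case: (#|[set w | adj F (last r s) w]| =P 1) => [leaf | nonleaf].
  by exists [::]; rewrite cats0.
case/lastP: s bound us ps s0 nonleaf => [|q v] // bound us ps _.
rewrite last_rcons => /eqP nonleaf.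
have vx : last r q \in [set w | adj F v w].
  by move: ps; rewrite inE rcons_path adj_sym => /andP[].
have [z] := card_neq1_other vx nonleaf; rewrite inE => vz zx.
have [uz pz] := path_extend us ps vz zx.
have size_lt_m : size (r :: rcons (rcons q v) z) <= m.
  by rewrite -(card_uniqP uz) -[m in _ <= m]card_ord max_card.
have bound' : m - size (rcons (rcons q v) z) < k.
  by move: bound size_lt_m; rewrite /= !size_rcons; lia.
have [|t [ut pt leaf]] := IHk _ bound' uz pz; first by rewrite headI.
by exists (z :: t); rewrite -cat_rcons.
Qed.

Hypothesis incrF : forall r p, is_root F r ->
  uniq (r :: p) -> path (adj F) r p -> p <> [::] -> is_leaf F (last r p) ->
  sorted (fun u v : 'I_m => u < v) (r :: p).

Lemma increasing_forest_child_gt r q v z :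
  is_root F r -> uniq (r :: rcons q v) -> path (adj F) r (rcons q v) ->
  adj F v z -> z != last r q -> v < z.
Proof.
move=> root u p vz zx; have [uz pz] := path_extend u p vz zx.
have [|t [ut pt leaf]] := extend_to_leaf uz pz; first by rewrite headI.
have nonnil : rcons (rcons q v) z ++ t <> [::] by rewrite headI.
have := incrF root ut pt nonnil leaf; rewrite -!cats1 -!catA /= cat_path /=.
by case/and4P.
Qed.

Lemma increasing_forest_smaller_nbr_unique v u w :
  adj F v u -> adj F v w -> u < v -> w < v -> u = w.
Proof.
move=> vu vw uv wv; have [r [p [root up pp def_v]]] := exists_root_path v.
case/lastP: p up pp def_v => [|q v'] up pp /=; rewrite ?last_rcons => def_v.
  by subst r; move: (root u (connect1 vu)); rewrite leqNgt uv.
subst v'; have pred_of z : adj F v z -> z < v -> z = last r q.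
  move=> vz zv; apply/eqP; apply: contraTT zv => /(increasing_forest_child_gt root up pp vz).
  by rewrite -leqNgt => /ltnW.
by rewrite (pred_of u) // (pred_of w).
Qed.

End Forest.

Theorem lemma8p3 (m : nat) (E F : {set 'I_m * 'I_m}) :
  simple_edges E -> increasing_forest E F ->
  forall B : {set 'I_m * 'I_m}, broken_cycle E B -> ~~ (B \subset F).
Proof.
move=> simE [FE acF incrF] B [c [cycE [e ec [emax ->]]]]; apply/negP => BF.
have simF : simple_edges F by move=> f /(subsetP FE)/simE.
have [c_gt2 [uc cycc]] := cycE.
have /hasP[x0 x0c _] : has predT c by rewrite has_predT (ltnW (ltnW c_gt2)).
have [M Mc M_max] := arg_maxnP val x0c.
have adjF_M y : y \in c -> norm_edge M y \in cycle_edges c -> adj F M y.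
  move=> yc yec; rewrite adjE //; apply: (subsetP BF).
  rewrite in_setD1 yec andbT norm_edgeC eq_sym.
  exact: (max_label_edge_avoids_max_vertex simE cycE ec emax M_max yc).
have lt_M y : y \in c -> adj E M y -> y < M.
  move=> yc My; rewrite ltn_neqAle; apply/andP; split; last exact: M_max.
  by apply: contraTneq My => /val_inj->; exact: simple_adj_irrefl.
set P := prev c M; set S := next c M.
have Pc : P \in c by rewrite mem_prev.
have Sc : S \in c by rewrite mem_next.
have MP : adj E M P by rewrite adj_sym (prev_cycle cycc Mc).
have MS : adj E M S := next_cycle cycc Mc.
have FMP := adjF_M _ Pc (cycle_edges_prev uc Mc).
have FMS := adjF_M _ Sc (cycle_edges_next Mc).
have PM : P < M by apply: lt_M.
have SM : S < M by apply: lt_M.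
have PS : P != S := prev_neq_next uc c_gt2 Mc.
by rewrite (increasing_forest_smaller_nbr_unique simF acF incrF FMP FMS PM SM) eqxx in PS.
Qed.
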